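(* Let $f,g\in\mathrm{Diffeo}^-(\mathbb{R})$ with $f(0)=g(0)=0$ and $f\circ f=g\circ g$. Suppose $(T_0f)\circ(T_0f)\neq X$. Then $T_0f=T_0g$, and $f$ is conjugate to $g$ by an element of $\mathrm{Diffeo}^+(\mathbb{R})$, i.e. $f=h^{-1}\circ g\circ h$ for some $h\in\mathrm{Diffeo}^+(\mathbb{R})$.
   Context: $\mathrm{Diffeo}(\mathbb{R})$ is the group of $C^\infty$ diffeomorphisms of $\mathbb{R}$ under composition; $\mathrm{Diffeo}^+(\mathbb{R})$ (resp. $\mathrm{Diffeo}^-(\mathbb{R})$) is the set of orientation-preserving (resp. orientation-reversing) diffeomorphisms. For a diffeomorphism $\phi$ with $\phi(0)=0$, $T_0\phi=\phi'(0)X+\frac{\phi''(0)}{2}X^2+\cdots$ is its Taylor series at $0$, viewed as a formal power series under formal composition; $X$ denotes the identity series. *)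

From Stdlib Require Import Reals Factorial.
From Coquelicot Require Import Coquelicot.
Open Scope R_scope.

Definition smooth (f : R -> R) : Prop :=
  forall (n : nat) (x : R), ex_derive_n f n x.

Definition is_diffeo (f : R -> R) : Prop :=
  smooth f /\ exists g : R -> R, smooth g /\
    (forall x, g (f x) = x) /\ (forall x, f (g x) = x).

Definition is_diffeo_plus (f : R -> R) : Prop :=
  is_diffeo f /\ (forall x y, x < y -> f x < f y).

Definition is_diffeo_minus (f : R -> R) : Prop :=
  is_diffeo f /\ (forall x y, x < y -> f y < f x).

Definition fps := nat -> R.

Definition taylor0 (phi : R -> R) : fps :=
  fun n => Derive_n phi n 0 / INR (fact n).

Definition fpsX : fps := fun n => if Nat.eqb n 1 then 1 else 0.

Definition fps_one : fps := fun n => if Nat.eqb n 0 then 1 else 0.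

Definition fps_mul (a b : fps) : fps :=
  fun n => sum_f_R0 (fun k => a k * b (n - k)%nat) n.

Fixpoint fps_pow (b : fps) (k : nat) : fps :=
  match k with
  | O => fps_one
  | S k' => fps_mul b (fps_pow b k')
  end.

(* Formal composition a o b (meaningful when b 0 = 0: then b^k has order >= k,
   so coefficient n only involves k <= n). *)
Definition fps_comp (a b : fps) : fps :=
  fun n => sum_f_R0 (fun k => a k * fps_pow b k n) n.

(* Since f o f = g o g, the Taylor series A = T0 f and B = T0 g are formal square
   roots of F = T0 (f o f) with negative linear coefficient, and both commute with F.
   At the first index n >= 2 where A and B could differ, the n-th coefficient of
   A o A - B o B is (a + a^n) (A_n - B_n) with a = A_1 = B_1 < 0; this forces A_n = B_n
   unless a = -1 and n is even.  In that case F is tangent to the identity and, being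
   different from X, first differs from X in some degree p, which is odd because A
   commutes with F; the coefficient of degree n + p - 1 of A o F - B o F = F o A - F o B
   then reads (n - p) F_p (A_n - B_n) = 0.
   Taylor series compose formally because the truncated Taylor polynomial of a smooth
   function approximates it to order O(x^(n+1)) at 0, and such approximations are unique.
   Once T0 f = T0 g, the map g^-1 o f has the Taylor series of the identity at 0, so it
   glues smoothly on (-oo, 0) to the identity on [0, +oo); the resulting increasing
   diffeomorphism h satisfies f = h^-1 o g o h on each half-line, using f o f = g o g. *)

From Stdlib Require Import Reals Factorial Lra Lia Classical FunctionalExtensionality.
From Coquelicot Require Import Coquelicot.
Open Scope R_scope.

Lemma sum_f_R0_single (f : nat -> R) N k0 : (k0 <= N)%nat ->
  (forall k, (k <= N)%nat -> k <> k0 -> f k = 0) -> sum_f_R0 f N = f k0.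
Proof.
  induction N as [|N IH]; intros Hk0 Hf; simpl.
  - now replace k0 with 0%nat by lia.
  - destruct (Nat.eq_dec k0 (S N)) as [->|Hne].
    + rewrite sum_eq_R0; [ring|]. intros k Hk. apply Hf; lia.
    + rewrite IH, (Hf (S N)); [ring|lia|lia|lia|]. intros k Hk. apply Hf; lia.
Qed.

Lemma sum_f_R0_trunc (f : nat -> R) m N : (m <= N)%nat ->
  (forall k, (m < k <= N)%nat -> f k = 0) -> sum_f_R0 f N = sum_f_R0 f m.
Proof.
  induction N as [|N IH]; intros Hm Hf.
  - now replace m with 0%nat by lia.
  - destruct (Nat.eq_dec m (S N)) as [->|Hne]; [reflexivity|].
    simpl. rewrite IH, (Hf (S N)); [ring|lia|lia|]. intros k Hk. apply Hf; lia.
Qed.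

Lemma sum_f_R0_swap (f : nat -> nat -> R) N M :
  sum_f_R0 (fun k => sum_f_R0 (fun m => f k m) M) N =
  sum_f_R0 (fun m => sum_f_R0 (fun k => f k m) N) M.
Proof.
  induction N as [|N IH]; [reflexivity|]. simpl. rewrite IH, <- plus_sum. reflexivity.
Qed.

(** * Formal power series *)

Definition fps_agree_below (A B : fps) (n : nat) : Prop :=
  forall j, (j < n)%nat -> A j = B j.

Lemma fps_pow_S b k m :
  fps_pow b (S k) m = sum_f_R0 (fun i => b i * fps_pow b k (m - i)%nat) m.
Proof. reflexivity. Qed.

Lemma fps_pow_1 b m : fps_pow b 1 m = b m.
Proof.
  rewrite fps_pow_S, (sum_f_R0_single _ _ m); [|lia|].
  - rewrite Nat.sub_diag. cbn. ring.
  - intros i Hi Hne. cbn. unfold fps_one.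
    destruct (Nat.eqb_spec (m - i) 0); [lia|ring].
Qed.

Lemma fps_pow_low b k m : b 0%nat = 0 -> (m < k)%nat -> fps_pow b k m = 0.
Proof.
  intros Hb0. revert m. induction k as [|k IH]; intros m Hm; [lia|].
  rewrite fps_pow_S. apply sum_eq_R0. intros [|i] Hi.
  - rewrite Hb0. ring.
  - rewrite IH by lia. ring.
Qed.

Lemma fps_pow_diag b k : b 0%nat = 0 -> fps_pow b k k = b 1%nat ^ k.
Proof.
  intros Hb0. induction k as [|k IH]; [reflexivity|].
  rewrite fps_pow_S, (sum_f_R0_single _ _ 1); [|lia|].
  - replace (S k - 1)%nat with k by lia. rewrite IH. simpl. ring.
  - intros [|i] Hi Hne; [rewrite Hb0; ring|].
    rewrite fps_pow_low by (auto; lia). ring.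
Qed.

Lemma fps_pow_X k m : fps_pow fpsX k m = if Nat.eqb m k then 1 else 0.
Proof.
  revert m; induction k as [|k IH]; intros m; [reflexivity|].
  rewrite fps_pow_S. destruct m as [|m].
  - cbn. unfold fpsX. cbn. ring.
  - rewrite (sum_f_R0_single _ _ 1); [|lia|].
    + replace (S m - 1)%nat with m by lia. rewrite IH. unfold fpsX. cbn. ring.
    + intros i Hi Hne. unfold fpsX. destruct (Nat.eqb_spec i 1); [lia|ring].
Qed.

Lemma fps_pow_agree_below (A B : fps) n : (2 <= n)%nat -> A 0%nat = 0 -> B 0%nat = 0 ->
  fps_agree_below A B n -> forall k,
  fps_agree_below (fps_pow A k) (fps_pow B k) (n + k - 1) /\
  fps_pow A k (n + k - 1)%nat - fps_pow B k (n + k - 1)%nat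
    = INR k * A 1%nat ^ (k - 1) * (A n - B n).
Proof.
  intros Hn HA0 HB0 HAB k. induction k as [|k [IH1 IH2]].
  - split; [intros j _; reflexivity|]. simpl. ring.
  - assert (Hdiff : forall m, fps_pow A (S k) m - fps_pow B (S k) m =
       sum_f_R0 (fun i => (A i - B i) * fps_pow A k (m - i)%nat) m +
       sum_f_R0 (fun i => B i * (fps_pow A k (m - i)%nat - fps_pow B k (m - i)%nat)) m).
    { intros m. rewrite !fps_pow_S, <- plus_sum, <- minus_sum. apply sum_eq. intros; ring. }
    assert (Hfirst : forall m, (m < n + k)%nat ->
       sum_f_R0 (fun i => (A i - B i) * fps_pow A k (m - i)%nat) m = 0).
    { intros m Hm. apply sum_eq_R0. intros i Hi. destruct (Nat.lt_ge_cases i n).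
      - rewrite HAB by lia. ring.
      - rewrite fps_pow_low by (auto; lia). ring. }
    assert (Hsecond : forall m, (m < n + k)%nat ->
       sum_f_R0 (fun i => B i * (fps_pow A k (m - i)%nat - fps_pow B k (m - i)%nat)) m = 0).
    { intros m Hm. apply sum_eq_R0. intros [|i] Hi; [rewrite HB0; ring|].
      rewrite IH1 by lia. ring. }
    split.
    + intros m Hm. apply Rminus_diag_uniq. rewrite Hdiff, Hfirst, Hsecond by lia. ring.
    + replace (n + S k - 1)%nat with (n + k)%nat by lia. rewrite Hdiff.
      rewrite (sum_f_R0_single _ _ n); [|lia|].
      2:{ intros i Hi Hne. destruct (Nat.lt_ge_cases i n).
          - rewrite HAB by lia. ring.
          - rewrite fps_pow_low by (auto; lia). ring. }
      rewrite (sum_f_R0_single _ _ 1); [|lia|].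
      2:{ intros [|i] Hi Hne; [rewrite HB0; ring|]. rewrite IH1 by lia. ring. }
      replace (n + k - n)%nat with k by lia.
      rewrite IH2, fps_pow_diag, <- (HAB 1%nat), S_INR by (auto; lia).
      destruct k as [|k]; simpl; [ring|]. rewrite Nat.sub_0_r. ring.
Qed.

Lemma fps_comp_0 a b : fps_comp a b 0%nat = a 0%nat.
Proof. unfold fps_comp. cbn. unfold fps_one. cbn. ring. Qed.

Lemma fps_comp_1 a b : fps_comp a b 1%nat = a 1%nat * b 1%nat.
Proof. unfold fps_comp. cbn -[fps_pow]. rewrite fps_pow_1. unfold fps_one. cbn. ring. Qed.

Lemma fps_comp_X_r a m : fps_comp a fpsX m = a m.
Proof.
  unfold fps_comp. rewrite (sum_f_R0_single _ _ m), fps_pow_X, Nat.eqb_refl; [ring|lia|].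
  intros k Hk Hne. rewrite fps_pow_X. destruct (Nat.eqb_spec m k); [lia|ring].
Qed.

Lemma fps_comp_X_l a m : a 0%nat = 0 -> fps_comp fpsX a m = a m.
Proof.
  intros Ha0. destruct m as [|m]; [rewrite fps_comp_0; auto|].
  unfold fps_comp. rewrite (sum_f_R0_single _ _ 1), fps_pow_1; [|lia|].
  - unfold fpsX. cbn. ring.
  - intros k Hk Hne. unfold fpsX. destruct (Nat.eqb_spec k 1); [lia|ring].
Qed.

Lemma fps_comp_outer_diff A B C n : C 0%nat = 0 -> fps_agree_below A B n ->
  fps_comp A C n - fps_comp B C n = C 1%nat ^ n * (A n - B n).
Proof.
  intros HC0 HAB. unfold fps_comp. rewrite <- minus_sum.
  rewrite (sum_f_R0_single _ _ n), fps_pow_diag by (auto; intros k Hk Hne; rewrite HAB by lia; ring).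
  ring.
Qed.

Lemma fps_comp_inner_diff A C D p : (2 <= p)%nat -> C 0%nat = 0 -> D 0%nat = 0 ->
  fps_agree_below C D p ->
  fps_comp A C p - fps_comp A D p = A 1%nat * (C p - D p).
Proof.
  intros Hp HC0 HD0 HCD. pose proof (fps_pow_agree_below C D p Hp HC0 HD0 HCD) as Hpow.
  unfold fps_comp. rewrite <- minus_sum, (sum_f_R0_single _ _ 1), !fps_pow_1; [ring|lia|].
  intros [|[|k]] Hk Hne; [cbn; ring|lia|].
  rewrite (proj1 (Hpow (S (S k)))) by lia. ring.
Qed.

Lemma fps_comp_outer_diff_near_X A B C n p : (2 <= p)%nat -> C 0%nat = 0 ->
  fps_agree_below C fpsX p -> fps_agree_below A B n ->
  fps_comp A C (n + p - 1)%nat - fps_comp B C (n + p - 1)%nat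
    = (A (n + p - 1)%nat - B (n + p - 1)%nat) + INR n * C p * (A n - B n).
Proof.
  intros Hp HC0 HCX HAB. set (m := (n + p - 1)%nat).
  pose proof (fps_pow_agree_below C fpsX p Hp HC0 eq_refl HCX) as Hpow.
  assert (HXp : fpsX p = 0) by (unfold fpsX; destruct (Nat.eqb_spec p 1); [lia|reflexivity]).
  assert (HC1 : C 1%nat = 1) by (apply HCX; lia).
  unfold fps_comp.
  transitivity (sum_f_R0 (fun k => (A k - B k) * fps_pow fpsX k m) m +
                sum_f_R0 (fun k => (A k - B k) * (fps_pow C k m - fps_pow fpsX k m)) m).
  { rewrite <- minus_sum, <- plus_sum. apply sum_eq. intros; ring. }
  rewrite (sum_f_R0_single _ _ m), fps_pow_X, Nat.eqb_refl; [|lia|].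
  2:{ intros k Hk Hne. rewrite fps_pow_X. destruct (Nat.eqb_spec m k); [lia|ring]. }
  rewrite (sum_f_R0_single _ _ n); [|unfold m; lia|].
  2:{ intros k Hk Hne. destruct (Nat.lt_ge_cases k n).
      - rewrite HAB by lia. ring.
      - rewrite (proj1 (Hpow k)) by (unfold m; lia). ring. }
  replace m with (p + n - 1)%nat by (unfold m; lia).
  rewrite (proj2 (Hpow n)), HC1, HXp, pow1. ring.
Qed.

Lemma fps_comp_inner_diff_near_X A B C n p : (2 <= n)%nat -> (2 <= p)%nat ->
  A 0%nat = 0 -> B 0%nat = 0 -> fps_agree_below A B n -> fps_agree_below C fpsX p ->
  fps_comp C A (n + p - 1)%nat - fps_comp C B (n + p - 1)%nat
    = (A (n + p - 1)%nat - B (n + p - 1)%nat) + INR p * A 1%nat ^ (p - 1) * C p * (A n - B n).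
Proof.
  intros Hn Hp HA0 HB0 HAB HCX. set (m := (n + p - 1)%nat).
  pose proof (fps_pow_agree_below A B n Hn HA0 HB0 HAB) as Hpow.
  assert (HXp : fpsX p = 0) by (unfold fpsX; destruct (Nat.eqb_spec p 1); [lia|reflexivity]).
  unfold fps_comp.
  transitivity (sum_f_R0 (fun k => fpsX k * (fps_pow A k m - fps_pow B k m)) m +
                sum_f_R0 (fun k => (C k - fpsX k) * (fps_pow A k m - fps_pow B k m)) m).
  { rewrite <- minus_sum, <- plus_sum. apply sum_eq. intros; ring. }
  rewrite (sum_f_R0_single _ _ 1), !fps_pow_1; [|unfold m; lia|].
  2:{ intros k Hk Hne. unfold fpsX. destruct (Nat.eqb_spec k 1); [lia|ring]. }
  rewrite (sum_f_R0_single _ _ p); [|unfold m; lia|].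
  2:{ intros k Hk Hne. destruct (Nat.lt_ge_cases k p).
      - rewrite HCX by lia. ring.
      - rewrite (proj1 (Hpow k)) by (unfold m; lia). ring. }
  unfold m. rewrite (proj2 (Hpow p)), HXp. unfold fpsX. cbn. ring.
Qed.

Lemma pow_eq_opp_neg a n : a < 0 -> (2 <= n)%nat -> a ^ n = - a -> a = -1.
Proof.
  intros Ha Hn Hpow.
  assert (Hpred : a ^ (n - 1) = -1).
  { apply (Rmult_eq_reg_l a); [|lra].
    rewrite tech_pow_Rmult. replace (S (n - 1)) with n by lia. lra. }
  assert (Habs : (- a) ^ (n - 1) = 1).
  { rewrite <- (Rabs_left a), RPow_abs, Hpred by lra. rewrite Rabs_left; lra. }
  destruct (Rtotal_order (- a) 1) as [Hlt|[Heq|Hgt]]; [|lra|].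
  - pose proof (pow_lt_1_compat (- a) (n - 1) ltac:(lra) ltac:(lia)). lra.
  - pose proof (Rlt_pow_R1 (- a) (n - 1) Hgt ltac:(lia)). lra.
Qed.

Lemma fps_eq_strong_ind (A B : fps) :
  (forall n, fps_agree_below A B n -> A n = B n) -> A = B.
Proof.
  intros Hstep. apply functional_extensionality. intros n.
  apply Hstep. induction n as [|n IH]; intros j Hj; [lia|].
  destruct (Nat.eq_dec j n) as [->|Hne]; [apply Hstep, IH|apply IH; lia].
Qed.

Lemma fps_first_deviation_from_X F : F 0%nat = 0 -> F 1%nat = 1 -> F <> fpsX ->
  exists p, (2 <= p)%nat /\ fps_agree_below F fpsX p /\ F p <> 0.
Proof.
  intros HF0 HF1 HFX.
  set (P := fun p => (2 <= p)%nat /\ F p <> 0).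
  assert (Pdec : forall p, P p \/ ~ P p).
  { intros p. unfold P. destruct (Nat.le_gt_cases 2 p), (Req_dec (F p) 0); (tauto || (right; intros [H1 H2]; lia)). }
  assert (Pex : exists p, P p).
  { apply NNPP. intros Hno. apply HFX, functional_extensionality. intros [|[|j]]; auto.
    apply NNPP. intros Hj. apply Hno. exists (S (S j)). split; [lia|auto]. }
  destruct (Wf_nat.dec_inh_nat_subset_has_unique_least_element P Pdec Pex)
    as [p [[[Hp2 HFp] Hleast] _]].
  exists p. repeat split; auto. intros [|[|j]] Hj; auto.
  apply NNPP. intros Hne. assert (P (S (S j))) by (split; [lia|exact Hne]).
  specialize (Hleast (S (S j)) ltac:(assumption)). lia.
Qed.

Lemma fps_square_diff A B n : (2 <= n)%nat -> A 0%nat = 0 -> B 0%nat = 0 ->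
  A 1%nat = B 1%nat -> fps_agree_below A B n ->
  fps_comp A A n - fps_comp B B n = (A 1%nat + A 1%nat ^ n) * (A n - B n).
Proof.
  intros Hn HA0 HB0 HA1 HAB.
  replace (fps_comp A A n - fps_comp B B n)
    with ((fps_comp A A n - fps_comp A B n) + (fps_comp A B n - fps_comp B B n)) by ring.
  rewrite fps_comp_inner_diff, fps_comp_outer_diff, <- HA1 by auto. ring.
Qed.

Lemma fps_commute_near_X_coef1 A F p : (2 <= p)%nat -> A 0%nat = 0 ->
  fps_agree_below F fpsX p -> F p <> 0 -> fps_comp A F = fps_comp F A ->
  A 1%nat ^ p = A 1%nat.
Proof.
  intros Hp HA0 HFX HFp HAF.
  assert (HF0 : F 0%nat = 0) by (apply HFX; lia).
  assert (HXp : fpsX p = 0) by (unfold fpsX; destruct (Nat.eqb_spec p 1); [lia|reflexivity]).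
  pose proof (fps_comp_inner_diff A F fpsX p Hp HF0 eq_refl HFX) as Hinner.
  pose proof (fps_comp_outer_diff F fpsX A p HA0 HFX) as Houter.
  rewrite fps_comp_X_r, HXp in Hinner. rewrite fps_comp_X_l, HXp, <- HAF in Houter by auto.
  apply (Rmult_eq_reg_r (F p)); auto. lra.
Qed.

Lemma fps_commute_near_X_diff A B F n p : (2 <= n)%nat -> (2 <= p)%nat ->
  A 0%nat = 0 -> B 0%nat = 0 -> fps_agree_below A B n -> fps_agree_below F fpsX p ->
  fps_comp A F = fps_comp F A -> fps_comp B F = fps_comp F B ->
  (INR n - INR p * A 1%nat ^ (p - 1)) * F p * (A n - B n) = 0.
Proof.
  intros Hn Hp HA0 HB0 HAB HFX HAF HBF.
  assert (HF0 : F 0%nat = 0) by (apply HFX; lia).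
  pose proof (fps_comp_outer_diff_near_X A B F n p Hp HF0 HFX HAB) as Houter.
  pose proof (fps_comp_inner_diff_near_X A B F n p Hn Hp HA0 HB0 HAB HFX) as Hinner.
  rewrite HAF, HBF in Houter. lra.
Qed.

Theorem fps_commuting_sqrt_unique A B F : A 0%nat = 0 -> B 0%nat = 0 ->
  A 1%nat < 0 -> B 1%nat < 0 -> fps_comp A A = F -> fps_comp B B = F ->
  fps_comp A F = fps_comp F A -> fps_comp B F = fps_comp F B -> F <> fpsX ->
  A = B.
Proof.
  intros HA0 HB0 HA1 HB1 HAA HBB HAF HBF HFX.
  assert (HF1 : F 1%nat = A 1%nat ^ 2).
  { rewrite <- HAA, fps_comp_1. ring. }
  assert (Ha : A 1%nat = B 1%nat).
  { assert (F 1%nat = B 1%nat ^ 2) by (rewrite <- HBB, fps_comp_1; ring). nra. }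
  apply fps_eq_strong_ind. intros n HAB.
  destruct n as [|[|n]]; [congruence|assumption|].
  apply Rminus_diag_uniq.
  pose proof (fps_square_diff A B (S (S n)) ltac:(lia) HA0 HB0 Ha HAB) as Hsq.
  rewrite HAA, HBB, Rminus_diag_eq in Hsq by reflexivity.
  destruct (Req_dec (A 1%nat + A 1%nat ^ S (S n)) 0) as [Hz|Hnz].
  2:{ apply (Rmult_eq_reg_l (A 1%nat + A 1%nat ^ S (S n))); lra. }
  assert (Hm1 : A 1%nat = -1) by (apply (pow_eq_opp_neg _ (S (S n))); [exact HA1|lia|lra]).
  assert (HF0 : F 0%nat = 0) by (rewrite <- HAA, fps_comp_0; auto).
  destruct (fps_first_deviation_from_X F HF0 ltac:(rewrite HF1, Hm1; ring) HFX)
    as [p [Hp [HFX' HFp]]].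
  pose proof (fps_commute_near_X_coef1 A F p Hp HA0 HFX' HFp HAF) as Hodd.
  pose proof (fps_commute_near_X_diff A B F (S (S n)) p ltac:(lia) Hp HA0 HB0 HAB HFX' HAF HBF)
    as Hdiff.
  rewrite Hm1 in Hz, Hodd, Hdiff.
  assert (Hpn : INR (S (S n)) <> INR p).
  { intros E. apply INR_eq in E. subst p. lra. }
  assert (Hsign : (-1) ^ (p - 1) = 1).
  { replace p with (S (p - 1)) in Hodd by lia. simpl in Hodd. lra. }
  rewrite Hsign in Hdiff.
  destruct (Rmult_integral _ _ Hdiff) as [H0|H0]; [|exact H0].
  destruct (Rmult_integral _ _ H0); [lra|contradiction].
Qed.

(** * Smooth functions and their Taylor expansions at 0 *)

Definition Cn (n : nat) (f : R -> R) : Prop :=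
  forall k x, (k <= n)%nat -> ex_derive_n f k x.

Lemma Derive_n_S_Derive f j y : Derive_n f (S j) y = Derive_n (Derive f) j y.
Proof. rewrite <- Nat.add_1_r, <- Derive_n_comp. reflexivity. Qed.

Lemma ex_derive_n_S_Derive f j x :
  ex_derive_n f (S (S j)) x <-> ex_derive_n (Derive f) (S j) x.
Proof.
  simpl. split; apply ex_derive_ext; intros t; [|symmetry]; apply Derive_n_S_Derive.
Qed.

Lemma Cn_S n f : (forall x, ex_derive f x) -> Cn n (Derive f) -> Cn (S n) f.
Proof.
  intros Hd Hc [|[|k]] x Hk; [exact I|apply Hd|].
  apply (proj2 (ex_derive_n_S_Derive f k x)), Hc. lia.
Qed.

Lemma Cn_S_inv n f : Cn (S n) f -> (forall x, ex_derive f x) /\ Cn n (Derive f).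
Proof.
  intros Hc. split.
  - intros x. apply (Hc 1%nat). lia.
  - intros [|k] x Hk; [exact I|]. apply (proj1 (ex_derive_n_S_Derive f k x)), Hc. lia.
Qed.

Lemma Cn_ext n f g : (forall x, f x = g x) -> Cn n f -> Cn n g.
Proof. intros Hfg Hf k x Hk. apply (ex_derive_n_ext f); auto. Qed.

Lemma Cn_plus n f g : Cn n f -> Cn n g -> Cn n (fun x => f x + g x).
Proof.
  intros Hf Hg k x Hk.
  apply ex_derive_n_plus; apply filter_forall; intros y j Hj; [apply Hf|apply Hg]; lia.
Qed.

Lemma Cn_mult n : forall f g, Cn n f -> Cn n g -> Cn n (fun x => f x * g x).
Proof.
  induction n as [|n IH]; intros f g Hf Hg.
  - intros k x Hk. now replace k with 0%nat by lia.
  - destruct (Cn_S_inv _ _ Hf) as [Hdf Hf']. destruct (Cn_S_inv _ _ Hg) as [Hdg Hg'].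
    apply Cn_S; [intros x; apply ex_derive_mult; auto|].
    apply (Cn_ext n (fun x => Derive f x * g x + f x * Derive g x)).
    { intros x. symmetry. apply Derive_mult; auto. }
    apply Cn_plus; apply IH; auto; intros k x Hk; [apply Hg|apply Hf]; lia.
Qed.

Lemma Cn_comp n : forall u v, Cn n u -> Cn n v -> Cn n (fun x => u (v x)).
Proof.
  induction n as [|n IH]; intros u v Hu Hv.
  - intros k x Hk. now replace k with 0%nat by lia.
  - destruct (Cn_S_inv _ _ Hu) as [Hdu Hu']. destruct (Cn_S_inv _ _ Hv) as [Hdv Hv'].
    apply Cn_S; [intros x; apply ex_derive_comp; auto|].
    apply (Cn_ext n (fun x => Derive u (v x) * Derive v x)).
    { intros x. rewrite (Derive_comp u v) by auto. apply Rmult_comm. }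
    apply Cn_mult; auto. apply IH; auto. intros k x Hk. apply Hv. lia.
Qed.

Lemma smooth_Cn f : smooth f <-> forall n, Cn n f.
Proof.
  split; intros Hf n.
  - intros k x _. apply Hf.
  - intros x. apply (Hf n n x). lia.
Qed.

Lemma smooth_comp u v : smooth u -> smooth v -> smooth (fun x => u (v x)).
Proof. rewrite !smooth_Cn. intros Hu Hv n. apply Cn_comp; auto. Qed.

Lemma smooth_id : smooth (fun x => x).
Proof.
  intros n x. apply (ex_derive_n_ext (fun x => x ^ 1)); [intros; simpl; ring|].
  apply ex_derive_n_pow.
Qed.

Lemma smooth_comp_opp f : smooth f -> smooth (fun t => f (- t)).
Proof. intros Hf. apply smooth_comp; auto. intros n x. apply ex_derive_n_opp, smooth_id. Qed.

Lemma smooth_ex_derive f x : smooth f -> ex_derive f x.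
Proof. intros Hf. apply (Hf 1%nat). Qed.

Definition trunc_eval (c : fps) (n : nat) (x : R) : R := sum_f_R0 (fun j => c j * x ^ j) n.

Definition bigO_at0 (n : nat) (f : R -> R) : Prop :=
  exists r M, 0 < r /\ 0 <= M /\ forall x, Rabs x < r -> Rabs (f x) <= M * Rabs x ^ (S n).

Definition bounded_at0 (f : R -> R) : Prop :=
  exists r M, 0 < r /\ forall x, Rabs x < r -> Rabs (f x) <= M.

Lemma Rabs_pow_le_1 x k : Rabs x <= 1 -> Rabs x ^ k <= 1.
Proof. intros Hx. rewrite <- (pow1 k). apply pow_incr. split; [apply Rabs_pos|auto]. Qed.

Lemma bigO_at0_ext n f g : (forall x, f x = g x) -> bigO_at0 n f -> bigO_at0 n g.
Proof.
  intros Hfg [r [M [Hr [HM Hf]]]]. exists r, M. repeat split; auto.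
  intros x Hx. rewrite <- Hfg. auto.
Qed.

Lemma bigO_at0_zero n : bigO_at0 n (fun _ => 0).
Proof. exists 1, 0. repeat split; try lra. intros x _. rewrite Rabs_R0. lra. Qed.

Lemma bigO_at0_plus n f g : bigO_at0 n f -> bigO_at0 n g -> bigO_at0 n (fun x => f x + g x).
Proof.
  intros [r1 [M1 [Hr1 [HM1 H1]]]] [r2 [M2 [Hr2 [HM2 H2]]]].
  exists (Rmin r1 r2), (M1 + M2). split; [apply Rmin_glb_lt; auto|split; [lra|]].
  intros x Hx. pose proof (Rmin_l r1 r2). pose proof (Rmin_r r1 r2).
  eapply Rle_trans; [apply Rabs_triang|].
  specialize (H1 x ltac:(lra)). specialize (H2 x ltac:(lra)). lra.
Qed.

Lemma bigO_at0_scal n c f : bigO_at0 n f -> bigO_at0 n (fun x => c * f x).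
Proof.
  intros [r [M [Hr [HM Hf]]]]. exists r, (Rabs c * M).
  split; [auto|split; [apply Rmult_le_pos; auto; apply Rabs_pos|]].
  intros x Hx. rewrite Rabs_mult, Rmult_assoc. apply Rmult_le_compat_l; [apply Rabs_pos|auto].
Qed.

Lemma bigO_at0_minus n f g : bigO_at0 n f -> bigO_at0 n g -> bigO_at0 n (fun x => f x - g x).
Proof.
  intros Hf Hg. apply (bigO_at0_ext n (fun x => f x + (-1) * g x)); [intros; ring|].
  apply bigO_at0_plus, bigO_at0_scal; auto.
Qed.

Lemma bigO_at0_sum n (F : nat -> R -> R) N : (forall k, (k <= N)%nat -> bigO_at0 n (F k)) ->
  bigO_at0 n (fun x => sum_f_R0 (fun k => F k x) N).
Proof.
  induction N as [|N IH]; intros HF; simpl; [apply HF; lia|].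
  apply bigO_at0_plus; [apply IH; intros; apply HF|apply HF]; lia.
Qed.

Lemma bigO_at0_mult_bounded n f g : bigO_at0 n f -> bounded_at0 g ->
  bigO_at0 n (fun x => f x * g x).
Proof.
  intros [r1 [M1 [Hr1 [HM1 H1]]]] [r2 [K [Hr2 H2]]].
  assert (HK : 0 <= K).
  { specialize (H2 0). rewrite Rabs_R0 in H2. pose proof (Rabs_pos (g 0)). specialize (H2 Hr2). lra. }
  exists (Rmin r1 r2), (M1 * K). split; [apply Rmin_glb_lt; auto|split; [apply Rmult_le_pos; auto|]].
  intros x Hx. pose proof (Rmin_l r1 r2). pose proof (Rmin_r r1 r2).
  rewrite Rabs_mult. replace (M1 * K * Rabs x ^ S n) with ((M1 * Rabs x ^ S n) * K) by ring.
  apply Rmult_le_compat; try apply Rabs_pos; [apply H1|apply H2]; lra.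
Qed.

Lemma bigO_at0_pow_mult n g : bounded_at0 g -> bigO_at0 n (fun x => x ^ (S n) * g x).
Proof.
  intros Hg. apply bigO_at0_mult_bounded; auto. exists 1, 1. repeat split; try lra.
  intros x _. rewrite <- RPow_abs. lra.
Qed.

Lemma bigO_at0_S n f : bigO_at0 (S n) f -> bigO_at0 n f.
Proof.
  intros [r [M [Hr [HM Hf]]]]. exists (Rmin r 1), M.
  split; [apply Rmin_glb_lt; lra|split; auto].
  intros x Hx. pose proof (Rmin_l r 1). pose proof (Rmin_r r 1).
  eapply Rle_trans; [apply Hf; lra|]. apply Rmult_le_compat_l; auto.
  change (Rabs x ^ S (S n)) with (Rabs x * Rabs x ^ S n).
  rewrite <- (Rmult_1_l (Rabs x ^ S n)) at 2.
  apply Rmult_le_compat_r; [apply pow_le, Rabs_pos|lra].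
Qed.

Lemma bigO_at0_comp n f v : bigO_at0 n f -> bigO_at0 0 v -> bigO_at0 n (fun x => f (v x)).
Proof.
  intros [r1 [M1 [Hr1 [HM1 H1]]]] [r2 [C [Hr2 [HC H2]]]].
  exists (Rmin r2 (r1 / (C + 1))), (M1 * C ^ S n).
  split; [apply Rmin_glb_lt; auto; apply Rdiv_lt_0_compat; lra|].
  split; [apply Rmult_le_pos; auto; apply pow_le; auto|].
  intros x Hx. pose proof (Rmin_l r2 (r1 / (C + 1))). pose proof (Rmin_r r2 (r1 / (C + 1))).
  assert (Hv : Rabs (v x) <= C * Rabs x) by (specialize (H2 x ltac:(lra)); simpl in H2; lra).
  assert (Hvr : Rabs (v x) < r1).
  { assert (Rabs x * (C + 1) < r1).
    { apply (Rmult_lt_reg_r (/ (C + 1))); [apply Rinv_0_lt_compat; lra|].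
      rewrite Rmult_assoc, Rinv_r by lra. unfold Rdiv in *. lra. }
    pose proof (Rabs_pos x). nra. }
  eapply Rle_trans; [apply H1; auto|]. rewrite Rmult_assoc. apply Rmult_le_compat_l; auto.
  rewrite <- Rpow_mult_distr. apply pow_incr. split; [apply Rabs_pos|auto].
Qed.

Lemma bounded_at0_ext f g : (forall x, f x = g x) -> bounded_at0 f -> bounded_at0 g.
Proof. intros Hfg [r [M [Hr Hf]]]. exists r, M. split; auto. intros x Hx. rewrite <- Hfg. auto. Qed.

Lemma bounded_at0_plus f g : bounded_at0 f -> bounded_at0 g -> bounded_at0 (fun x => f x + g x).
Proof.
  intros [r1 [M1 [Hr1 H1]]] [r2 [M2 [Hr2 H2]]].
  exists (Rmin r1 r2), (M1 + M2). split; [apply Rmin_glb_lt; auto|].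
  intros x Hx. pose proof (Rmin_l r1 r2). pose proof (Rmin_r r1 r2).
  eapply Rle_trans; [apply Rabs_triang|].
  specialize (H1 x ltac:(lra)). specialize (H2 x ltac:(lra)). lra.
Qed.

Lemma bounded_at0_of_bigO n f : bigO_at0 n f -> bounded_at0 f.
Proof.
  intros [r [M [Hr [HM Hf]]]]. exists (Rmin r 1), M. split; [apply Rmin_glb_lt; lra|].
  intros x Hx. pose proof (Rmin_l r 1). pose proof (Rmin_r r 1).
  eapply Rle_trans; [apply Hf; lra|]. rewrite <- (Rmult_1_r M) at 2.
  apply Rmult_le_compat_l; auto. apply Rabs_pow_le_1. lra.
Qed.

Lemma bounded_at0_monomial c k : bounded_at0 (fun x => c * x ^ k).
Proof.
  exists 1, (Rabs c). split; [lra|]. intros x Hx. rewrite Rabs_mult, <- RPow_abs.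
  rewrite <- (Rmult_1_r (Rabs c)) at 2.
  apply Rmult_le_compat_l; [apply Rabs_pos|apply Rabs_pow_le_1; lra].
Qed.

Lemma bounded_at0_trunc_eval c n : bounded_at0 (trunc_eval c n).
Proof.
  induction n as [|n IH].
  - apply (bounded_at0_monomial (c 0%nat) 0).
  - apply bounded_at0_plus; [exact IH|apply bounded_at0_monomial].
Qed.

Lemma eq_0_of_le_mult_small c r M : 0 < r -> 0 <= M ->
  (forall x, 0 < x < r -> Rabs c <= M * x) -> c = 0.
Proof.
  intros Hr HM Hc. destruct (Req_dec c 0) as [|Hne]; auto. exfalso.
  assert (Habs : 0 < Rabs c) by (apply Rabs_pos_lt; auto).
  set (x := Rmin (r / 2) (Rabs c / (2 * (M + 1)))).
  assert (Hx1 : x <= r / 2) by apply Rmin_l.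
  assert (Hx2 : x <= Rabs c / (2 * (M + 1))) by apply Rmin_r.
  assert (Hx : 0 < x) by (apply Rmin_glb_lt; [lra|apply Rdiv_lt_0_compat; lra]).
  specialize (Hc x ltac:(lra)).
  assert (Hx2' : 2 * (M + 1) * x <= Rabs c).
  { replace (Rabs c) with (2 * (M + 1) * (Rabs c / (2 * (M + 1)))) by (field; lra).
    apply Rmult_le_compat_l; lra. }
  nra.
Qed.

Lemma trunc_eval_S c n x : trunc_eval c (S n) x = trunc_eval c n x + c (S n) * x ^ (S n).
Proof. reflexivity. Qed.

Lemma trunc_eval_bigO_coef_0 n : forall c, bigO_at0 n (trunc_eval c n) ->
  forall j, (j <= n)%nat -> c j = 0.
Proof.
  induction n as [|n IH]; intros c Hc.
  - intros j Hj. replace j with 0%nat by lia. destruct Hc as [r [M [Hr [HM Hc]]]].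
    apply (eq_0_of_le_mult_small _ r M); auto. intros x Hx. specialize (Hc x).
    unfold trunc_eval in Hc. simpl in Hc. rewrite (Rabs_pos_eq x) in Hc by lra.
    rewrite !Rmult_1_r in Hc. apply Hc. lra.
  - assert (Hlow : forall j, (j <= n)%nat -> c j = 0).
    { apply IH.
      apply (bigO_at0_ext n (fun x => trunc_eval c (S n) x + (- c (S n) * x ^ S n))).
      { intros x. rewrite trunc_eval_S. ring. }
      apply bigO_at0_plus; [apply bigO_at0_S; auto|].
      apply (bigO_at0_ext n (fun x => x ^ S n * (- c (S n) * x ^ 0))); [intros; simpl; ring|].
      apply bigO_at0_pow_mult, bounded_at0_monomial. }
    intros j Hj. destruct (Nat.eq_dec j (S n)) as [->|Hne]; [|apply Hlow; lia].
    destruct Hc as [r [M [Hr [HM Hc]]]].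
    apply (eq_0_of_le_mult_small _ r M); auto. intros x Hx. specialize (Hc x).
    assert (Hz : trunc_eval c n x = 0)
      by (apply sum_eq_R0; intros; rewrite Hlow; auto; ring).
    rewrite trunc_eval_S, Hz in Hc.
    rewrite Rplus_0_l, Rabs_mult, (Rabs_pos_eq x), (Rabs_pos_eq (x ^ S n)) in Hc
      by (try apply pow_le; lra).
    assert (Hxn : 0 < x ^ S n) by (apply pow_lt; lra).
    apply (Rmult_le_reg_r (x ^ S n)); auto.
    replace (M * x * x ^ S n) with (M * x ^ S (S n)) by (simpl; ring).
    apply Hc. lra.
Qed.

Lemma continuous_bounded_01 g : (forall t, continuous g t) ->
  exists K, 0 <= K /\ forall t, 0 <= t <= 1 -> Rabs (g t) <= K.
Proof.
  intros Hg. assert (Hc : forall t, continuity_pt g t)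
    by (intros t; apply continuity_pt_filterlim, Hg).
  destruct (continuity_ab_maj g 0 1 ltac:(lra) (fun t _ => Hc t)) as [a [Ha _]].
  destruct (continuity_ab_maj (fun t => - g t) 0 1 ltac:(lra)
              (fun t _ => continuity_pt_opp _ _ (Hc t))) as [b [Hb _]].
  pose proof (Rabs_pos (g a)). pose proof (Rabs_pos (g b)).
  pose proof (Rle_abs (g a)). pose proof (Rle_abs (- g b)). rewrite Rabs_Ropp in *.
  exists (Rabs (g a) + Rabs (g b)). split; [lra|].
  intros t Ht. specialize (Ha t Ht). specialize (Hb t Ht). simpl in Hb.
  unfold Rabs at 1. destruct (Rcase_abs (g t)); lra.
Qed.

Lemma taylor0_0 f : taylor0 f 0%nat = f 0.
Proof. unfold taylor0. simpl. field. Qed.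

Lemma trunc_eval_at_0 c n : trunc_eval c n 0 = c 0%nat.
Proof.
  unfold trunc_eval. rewrite (sum_f_R0_single _ _ 0); [simpl; ring|lia|].
  intros j Hj Hne. rewrite pow_i by lia. ring.
Qed.

Lemma taylor_remainder_right f n : smooth f -> exists M, 0 <= M /\
  forall x, 0 < x < 1 -> Rabs (f x - trunc_eval (taylor0 f) n x) <= M * x ^ S n.
Proof.
  intros Hf.
  assert (Hc : forall t, continuous (Derive_n f (S n)) t)
    by (intros t; apply (ex_derive_continuous (Derive_n f (S n)) t), (Hf (S (S n)) t)).
  destruct (continuous_bounded_01 _ Hc) as [K [HK HKb]].
  assert (Hfact : 0 < INR (fact (S n))) by apply INR_fact_lt_0.
  exists (K / INR (fact (S n))). split; [apply Rdiv_le_0_compat; auto|].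
  intros x Hx.
  destruct (Taylor_Lagrange f n 0 x ltac:(lra) (fun t _ k _ => Hf k t)) as [z [Hz Hlag]].
  assert (Hpoly : trunc_eval (taylor0 f) n x =
    sum_f_R0 (fun m => (x - 0) ^ m / INR (fact m) * Derive_n f m 0) n).
  { unfold trunc_eval, taylor0. apply sum_eq. intros j _. rewrite Rminus_0_r.
    field. apply INR_fact_neq_0. }
  rewrite Hlag, Hpoly, Rminus_0_r.
  match goal with |- Rabs (?s + ?r - ?s) <= _ => replace (s + r - s) with r by ring end.
  unfold Rdiv. rewrite !Rabs_mult, (Rabs_pos_eq (x ^ S n)), (Rabs_pos_eq (/ _))
    by (try apply pow_le; try (left; apply Rinv_0_lt_compat); lra).
  replace (K * / INR (fact (S n)) * x ^ S n) with (x ^ S n * / INR (fact (S n)) * K) by ring.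
  apply Rmult_le_compat_l; [|apply HKb; lra].
  apply Rmult_le_pos; [apply pow_le; lra|left; apply Rinv_0_lt_compat; auto].
Qed.

Lemma taylor0_comp_opp f j : smooth f ->
  taylor0 (fun t => f (- t)) j = (-1) ^ j * taylor0 f j.
Proof.
  intros Hf. unfold taylor0. rewrite Derive_n_comp_opp, Ropp_0; [unfold Rdiv; ring|].
  apply filter_forall. intros y k _. apply Hf.
Qed.

Lemma taylor_remainder_bigO f n : smooth f ->
  bigO_at0 n (fun x => f x - trunc_eval (taylor0 f) n x).
Proof.
  intros Hf.
  destruct (taylor_remainder_right f n Hf) as [M1 [HM1 H1]].
  destruct (taylor_remainder_right (fun t => f (- t)) n (smooth_comp_opp f Hf)) as [M2 [HM2 H2]].
  exists 1, (M1 + M2). split; [lra|split; [lra|]].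
  intros x Hx. destruct (Rtotal_order x 0) as [Hneg|[->|Hpos]].
  - rewrite Rabs_left in Hx by lra. specialize (H2 (- x) ltac:(lra)).
    rewrite Ropp_involutive in H2.
    assert (Heval : trunc_eval (taylor0 (fun t => f (- t))) n (- x) = trunc_eval (taylor0 f) n x).
    { unfold trunc_eval. apply sum_eq. intros j _. rewrite taylor0_comp_opp by auto.
      replace (- x) with ((-1) * x) by ring. rewrite Rpow_mult_distr.
      replace ((-1) ^ j * taylor0 f j * ((-1) ^ j * x ^ j))
        with (((-1) * (-1)) ^ j * taylor0 f j * x ^ j) by (rewrite Rpow_mult_distr; ring).
      replace ((-1) * (-1)) with 1 by ring. rewrite pow1. ring. }
    rewrite Heval in H2. rewrite (Rabs_left x) by lra.
    assert (0 <= (- x) ^ S n) by (apply pow_le; lra). nra.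
  - rewrite trunc_eval_at_0, taylor0_0, Rminus_diag_eq, Rabs_R0 by reflexivity.
    apply Rmult_le_pos; [lra|apply pow_le; lra].
  - rewrite (Rabs_pos_eq x) in Hx |- * by lra. specialize (H1 x ltac:(lra)).
    assert (0 <= x ^ S n) by (apply pow_le; lra). nra.
Qed.

Lemma taylor0_unique f c n : smooth f ->
  bigO_at0 n (fun x => f x - trunc_eval c n x) -> taylor0 f n = c n.
Proof.
  intros Hf Hc. symmetry. apply Rminus_diag_uniq.
  apply (trunc_eval_bigO_coef_0 n (fun j => c j - taylor0 f j)); [|lia].
  apply (bigO_at0_ext n (fun x => (f x - trunc_eval (taylor0 f) n x) - (f x - trunc_eval c n x))).
  { intros x. transitivity (trunc_eval c n x - trunc_eval (taylor0 f) n x); [ring|].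
    unfold trunc_eval. rewrite <- minus_sum. apply sum_eq. intros; ring. }
  apply bigO_at0_minus; auto. apply taylor_remainder_bigO; auto.
Qed.

Lemma trunc_eval_mult_bigO a b n :
  bigO_at0 n (fun x => trunc_eval a n x * trunc_eval b n x - trunc_eval (fps_mul a b) n x).
Proof.
  destruct n as [|n'].
  - apply (bigO_at0_ext 0 (fun _ => 0)); [|apply bigO_at0_zero].
    intros x. unfold trunc_eval, fps_mul. simpl. ring.
  - set (N := S n').
    (* [cauchy_finite]: the product of the truncations minus its terms of degree <= N *)
    apply (bigO_at0_ext N (fun x => sum_f_R0 (fun k => sum_f_R0 (fun l =>
      (a (S (l + k)) * x ^ S (l + k)) * (b (N - l)%nat * x ^ (N - l)))
      (Init.Nat.pred (N - k))) (Init.Nat.pred N))).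
    { intros x. unfold trunc_eval at 1 2. rewrite cauchy_finite by (unfold N; lia).
      enough (Hlow : sum_f_R0 (fun k => sum_f_R0 (fun p =>
          a p * x ^ p * (b (k - p)%nat * x ^ (k - p))) k) N = trunc_eval (fps_mul a b) N x)
        by (rewrite Hlow; ring).
      unfold trunc_eval, fps_mul. apply sum_eq. intros k Hk.
      rewrite (Rmult_comm _ (x ^ k)), scal_sum. apply sum_eq. intros p Hp.
      replace (x ^ k) with (x ^ p * x ^ (k - p)) by (rewrite <- pow_add; f_equal; lia). ring. }
    apply bigO_at0_sum. intros k Hk. apply bigO_at0_sum. intros l Hl.
    apply (bigO_at0_ext N (fun x => x ^ S N * (a (S (l + k)) * b (N - l)%nat * x ^ k))).
    { intros x.
      assert (Hpow : x ^ S (l + k) * x ^ (N - l) = x ^ S N * x ^ k)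
        by (rewrite <- !pow_add; f_equal; unfold N in *; lia).
      transitivity (a (S (l + k)) * b (N - l)%nat * (x ^ S (l + k) * x ^ (N - l)));
        [rewrite Hpow; ring|ring]. }
    apply bigO_at0_pow_mult, bounded_at0_monomial.
Qed.

Lemma trunc_eval_one n x : trunc_eval fps_one n x = 1.
Proof.
  unfold trunc_eval. rewrite (sum_f_R0_single _ _ 0); [unfold fps_one; simpl; ring|lia|].
  intros j Hj Hne. unfold fps_one. destruct (Nat.eqb_spec j 0); [lia|ring].
Qed.

Lemma bounded_at0_smooth v : smooth v -> bounded_at0 v.
Proof.
  intros Hv.
  apply (bounded_at0_ext (fun x => (v x - trunc_eval (taylor0 v) 0 x) + trunc_eval (taylor0 v) 0 x));
    [intros; ring|].
  apply bounded_at0_plus; [|apply bounded_at0_trunc_eval].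
  apply (bounded_at0_of_bigO 0), taylor_remainder_bigO, Hv.
Qed.

Lemma smooth_pow_bigO v n k : smooth v ->
  bigO_at0 n (fun x => v x ^ k - trunc_eval (fps_pow (taylor0 v) k) n x).
Proof.
  intros Hv. induction k as [|k IH].
  - apply (bigO_at0_ext n (fun _ => 0)); [|apply bigO_at0_zero].
    intros x. simpl. rewrite trunc_eval_one. ring.
  - set (T := taylor0 v) in *.
    apply (bigO_at0_ext n (fun x => (v x ^ k - trunc_eval (fps_pow T k) n x) * v x +
       (v x - trunc_eval T n x) * trunc_eval (fps_pow T k) n x +
       (trunc_eval T n x * trunc_eval (fps_pow T k) n x - trunc_eval (fps_mul T (fps_pow T k)) n x))).
    { intros x. simpl. ring. }
    apply bigO_at0_plus; [apply bigO_at0_plus|apply trunc_eval_mult_bigO].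
    + apply bigO_at0_mult_bounded; auto. apply bounded_at0_smooth; auto.
    + apply bigO_at0_mult_bounded; [apply taylor_remainder_bigO; auto|apply bounded_at0_trunc_eval].
Qed.

Lemma trunc_eval_fps_comp a b n x : b 0%nat = 0 ->
  sum_f_R0 (fun k => a k * trunc_eval (fps_pow b k) n x) n = trunc_eval (fps_comp a b) n x.
Proof.
  intros Hb0. unfold trunc_eval, fps_comp.
  transitivity (sum_f_R0 (fun k => sum_f_R0 (fun m => a k * fps_pow b k m * x ^ m) n) n).
  { apply sum_eq. intros k _. rewrite scal_sum. apply sum_eq. intros; ring. }
  rewrite sum_f_R0_swap. apply sum_eq. intros m Hm. rewrite (Rmult_comm _ (x ^ m)), scal_sum.
  apply sum_f_R0_trunc; auto. intros k Hk. rewrite fps_pow_low by (auto; lia). ring.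
Qed.

Lemma smooth_comp_taylor_bigO u v n : smooth u -> smooth v -> v 0 = 0 ->
  bigO_at0 n (fun x => u (v x) - trunc_eval (fps_comp (taylor0 u) (taylor0 v)) n x).
Proof.
  intros Hu Hv Hv0.
  assert (Hb0 : taylor0 v 0%nat = 0) by (rewrite taylor0_0; auto).
  apply (bigO_at0_ext n (fun x => (u (v x) - trunc_eval (taylor0 u) n (v x)) +
     sum_f_R0 (fun k => taylor0 u k * (v x ^ k - trunc_eval (fps_pow (taylor0 v) k) n x)) n)).
  { intros x. rewrite <- trunc_eval_fps_comp by exact Hb0.
    assert (Hsplit :
      sum_f_R0 (fun k => taylor0 u k * (v x ^ k - trunc_eval (fps_pow (taylor0 v) k) n x)) n =
      trunc_eval (taylor0 u) n (v x) -
      sum_f_R0 (fun k => taylor0 u k * trunc_eval (fps_pow (taylor0 v) k) n x) n).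
    { unfold trunc_eval. rewrite <- minus_sum. apply sum_eq. intros; ring. }
    rewrite Hsplit. ring. }
  apply bigO_at0_plus.
  - apply (bigO_at0_comp n (fun y => u y - trunc_eval (taylor0 u) n y) v);
      [apply taylor_remainder_bigO; auto|].
    apply (bigO_at0_ext 0 (fun x => v x - trunc_eval (taylor0 v) 0 x));
      [intros x; unfold trunc_eval; simpl; rewrite Hb0; ring|].
    apply taylor_remainder_bigO; auto.
  - apply bigO_at0_sum. intros k _. apply bigO_at0_scal, smooth_pow_bigO; auto.
Qed.

Lemma taylor0_comp u v : smooth u -> smooth v -> v 0 = 0 ->
  taylor0 (fun x => u (v x)) = fps_comp (taylor0 u) (taylor0 v).
Proof.
  intros Hu Hv Hv0. apply functional_extensionality. intros n.
  apply taylor0_unique; [apply smooth_comp; auto|apply smooth_comp_taylor_bigO; auto].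
Qed.

(** * Gluing two smooth functions at 0 *)

Definition glue (p q : R -> R) (x : R) : R := if Rle_dec 0 x then p x else q x.

Lemma glue_pos p q x : 0 <= x -> glue p q x = p x.
Proof. intros Hx. unfold glue. destruct (Rle_dec 0 x); [reflexivity|lra]. Qed.

Lemma glue_neg p q x : x < 0 -> glue p q x = q x.
Proof. intros Hx. unfold glue. destruct (Rle_dec 0 x); [lra|reflexivity]. Qed.

Lemma is_derive_glue_0 p q l : p 0 = q 0 -> is_derive p 0 l -> is_derive q 0 l ->
  is_derive (glue p q) 0 l.
Proof.
  intros Hpq. rewrite !is_derive_Reals. intros Hp Hq eps Heps.
  destruct (Hp eps Heps) as [d1 H1]. destruct (Hq eps Heps) as [d2 H2].
  assert (Hd : 0 < Rmin d1 d2) by (apply Rmin_glb_lt; apply cond_pos).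
  exists (mkposreal _ Hd). intros h Hh Hha. simpl in Hha.
  pose proof (Rmin_l d1 d2). pose proof (Rmin_r d1 d2).
  rewrite (glue_pos p q 0) by lra. destruct (Rle_dec 0 h).
  - rewrite glue_pos by lra. apply H1; auto. lra.
  - rewrite glue_neg, Hpq by lra. apply H2; auto. lra.
Qed.

Lemma is_derive_glue p q p' q' :
  (forall x, is_derive p x (p' x)) -> (forall x, is_derive q x (q' x)) ->
  p 0 = q 0 -> p' 0 = q' 0 -> forall x, is_derive (glue p q) x (glue p' q' x).
Proof.
  intros Hp Hq Hpq Hpq' x. destruct (Rtotal_order x 0) as [Hneg|[->|Hpos]].
  - rewrite glue_neg by auto. apply (is_derive_ext_loc q); [|apply Hq].
    apply (filter_imp (fun u => u < 0)); [intros u Hu; rewrite glue_neg; auto|].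
    apply (open_lt 0 x Hneg).
  - rewrite glue_pos by lra. apply is_derive_glue_0; auto. rewrite Hpq'. auto.
  - rewrite glue_pos by lra. apply (is_derive_ext_loc p); [|apply Hp].
    apply (filter_imp (fun u => 0 < u)); [intros u Hu; rewrite glue_pos; auto; lra|].
    apply (open_gt 0 x Hpos).
Qed.

Lemma smooth_glue p q : smooth p -> smooth q ->
  (forall n, Derive_n p n 0 = Derive_n q n 0) -> smooth (glue p q).
Proof.
  intros Hp Hq Hpq.
  assert (Hn : forall n, (forall x, Derive_n (glue p q) n x = glue (Derive_n p n) (Derive_n q n) x)
                        /\ (forall x, ex_derive_n (glue p q) n x)).
  { induction n as [|n [IH1 IH2]]; [split; intros x; [reflexivity|exact I]|].
    assert (Hd : forall x, is_derive (glue (Derive_n p n) (Derive_n q n)) x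
                            (glue (Derive_n p (S n)) (Derive_n q (S n)) x)).
    { apply is_derive_glue; auto; intros x; apply Derive_correct; [apply (Hp (S n))|apply (Hq (S n))]. }
    split; intros x.
    - simpl. rewrite (Derive_ext _ _ x IH1). apply is_derive_unique, Hd.
    - simpl. apply (ex_derive_ext (glue (Derive_n p n) (Derive_n q n))).
      + intros t. symmetry. apply IH1.
      + eexists. apply Hd. }
  intros n x. apply Hn.
Qed.

Lemma taylor0_eq_Derive_n p q n : taylor0 p = taylor0 q -> Derive_n p n 0 = Derive_n q n 0.
Proof.
  intros Hpq. apply (f_equal (fun c => c n)) in Hpq. unfold taylor0 in Hpq.
  apply (Rmult_eq_reg_r (/ INR (fact n))); [exact Hpq|].
  apply Rinv_neq_0_compat, INR_fact_neq_0.
Qed.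

Lemma glue_id_inverse k k' : (forall x, x < 0 -> k x < 0) -> (forall x, k' (k x) = x) ->
  forall x, glue (fun y => y) k' (glue (fun y => y) k x) = x.
Proof.
  intros Hneg Hinv x. destruct (Rle_lt_dec 0 x).
  - rewrite (glue_pos _ k x) by lra. rewrite glue_pos by lra. reflexivity.
  - rewrite (glue_neg _ k x) by lra. rewrite glue_neg by (apply Hneg; lra). apply Hinv.
Qed.

Lemma glue_id_increasing k : k 0 = 0 -> (forall x y, x < y -> k x < k y) ->
  forall x y, x < y -> glue (fun z => z) k x < glue (fun z => z) k y.
Proof.
  intros Hk0 Hk x y Hxy. destruct (Rle_dec 0 x), (Rle_dec 0 y); try lra.
  - rewrite !glue_pos; auto.
  - rewrite (glue_neg _ _ x), (glue_pos _ _ y) by lra. specialize (Hk x 0 ltac:(lra)). lra.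
  - rewrite !glue_neg by lra. auto.
Qed.

Lemma glue_id_diffeo_plus k k' : smooth k -> smooth k' ->
  (forall x, k' (k x) = x) -> (forall x, k (k' x) = x) ->
  (forall x y, x < y -> k x < k y) -> (forall x y, x < y -> k' x < k' y) ->
  taylor0 k = taylor0 (fun x => x) -> taylor0 k' = taylor0 (fun x => x) ->
  is_diffeo_plus (glue (fun x => x) k) /\
  (forall x, glue (fun x => x) k' (glue (fun x => x) k x) = x) /\
  (forall x, glue (fun x => x) k (glue (fun x => x) k' x) = x).
Proof.
  intros Hk Hk' Hk'k Hkk' Hkinc Hk'inc Htk Htk'.
  assert (Hk0 : k 0 = 0) by (rewrite <- taylor0_0, Htk; apply taylor0_0).
  assert (Hk'0 : k' 0 = 0) by (rewrite <- taylor0_0, Htk'; apply taylor0_0).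
  assert (Hkneg : forall x, x < 0 -> k x < 0) by (intros x Hx; rewrite <- Hk0; auto).
  assert (Hk'neg : forall x, x < 0 -> k' x < 0) by (intros x Hx; rewrite <- Hk'0; auto).
  pose proof (glue_id_inverse k k' Hkneg Hk'k) as Hinv1.
  pose proof (glue_id_inverse k' k Hk'neg Hkk') as Hinv2.
  repeat split; auto.
  - apply smooth_glue; auto using smooth_id. intros n. symmetry. apply taylor0_eq_Derive_n, Htk.
  - exists (glue (fun x => x) k'). repeat split; auto.
    apply smooth_glue; auto using smooth_id. intros n. symmetry. apply taylor0_eq_Derive_n, Htk'.
  - apply glue_id_increasing; auto.
Qed.

Lemma decreasing_inverse f finv : (forall x y, x < y -> f y < f x) ->
  (forall x, f (finv x) = x) -> forall x y, x < y -> finv y < finv x.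
Proof.
  intros Hdec Hinv x y Hxy. destruct (Rtotal_order (finv y) (finv x)) as [|[Heq|Hgt]]; auto.
  - rewrite <- (Hinv x), <- (Hinv y), Heq in Hxy. lra.
  - specialize (Hdec _ _ Hgt). rewrite !Hinv in Hdec. lra.
Qed.

Lemma glue_conjugation f g finv ginv :
  (forall x y, x < y -> f y < f x) -> (forall x y, x < y -> g y < g x) ->
  f 0 = 0 -> g 0 = 0 -> (forall x, finv (f x) = x) -> (forall x, g (ginv x) = x) ->
  (forall x, f (f x) = g (g x)) ->
  forall x, f x = glue (fun y => y) (fun y => finv (g y))
                   (g (glue (fun y => y) (fun y => ginv (f y)) x)).
Proof.
  intros Hfd Hgd Hf0 Hg0 Hfinv Hginv Hfg x. destruct (Rtotal_order x 0) as [Hneg|[->|Hpos]].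
  - rewrite (glue_neg _ _ x), Hginv, glue_pos; auto.
    left. rewrite <- Hf0. auto.
  - rewrite (glue_pos _ _ 0), Hg0, glue_pos; auto; lra.
  - rewrite (glue_pos _ _ x), glue_neg, <- Hfg, Hfinv by (try rewrite <- Hg0; auto; lra).
    reflexivity.
Qed.

Lemma Derive_lt_0_diffeo_minus f x : is_diffeo_minus f -> Derive f x < 0.
Proof.
  intros [[Hf [finv [Hfinv [Hff _]]]] Hdec].
  assert (Hle : Derive f x <= 0).
  { set (pr := fun y => ex_derive_Reals_0 f y (smooth_ex_derive f y Hf)).
    rewrite <- (Derive_Reals f x (pr x)). apply (nonpos_derivative_0 f pr).
    intros y z [Hlt|Heq]; [left; auto|subst; right; reflexivity]. }
  assert (Hne : Derive f x <> 0).
  { intros Hz.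
    assert (Hchain : Derive (fun y => finv (f y)) x = Derive f x * Derive finv (f x))
      by (apply Derive_comp; apply smooth_ex_derive; auto).
    rewrite (Derive_ext _ (fun y => y)), Derive_id, Hz in Hchain by auto. lra. }
  lra.
Qed.

Lemma taylor0_1 f : taylor0 f 1%nat = Derive f 0.
Proof.
  unfold taylor0. change (INR (fact 1)) with 1. unfold Rdiv. rewrite Rinv_1, Rmult_1_r.
  reflexivity.
Qed.

Lemma taylor0_commute_square f : smooth f -> f 0 = 0 ->
  fps_comp (taylor0 f) (taylor0 (fun x => f (f x))) =
  fps_comp (taylor0 (fun x => f (f x))) (taylor0 f).
Proof.
  intros Hf Hf0. assert (Hff : smooth (fun x => f (f x))) by (apply smooth_comp; auto).
  rewrite <- (taylor0_comp f), <- (taylor0_comp _ f); auto. rewrite !Hf0. auto.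
Qed.

Lemma taylor0_sqrt_unique f g : is_diffeo_minus f -> is_diffeo_minus g ->
  f 0 = 0 -> g 0 = 0 -> (forall x, f (f x) = g (g x)) ->
  fps_comp (taylor0 f) (taylor0 f) <> fpsX -> taylor0 f = taylor0 g.
Proof.
  intros Hfm Hgm Hf0 Hg0 Hfg HX.
  pose proof (proj1 (proj1 Hfm)) as Hf. pose proof (proj1 (proj1 Hgm)) as Hg.
  assert (Hsq : (fun x => g (g x)) = (fun x => f (f x)))
    by (apply functional_extensionality; auto).
  assert (HAA : fps_comp (taylor0 f) (taylor0 f) = taylor0 (fun x => f (f x)))
    by (symmetry; apply taylor0_comp; auto).
  assert (HBB : fps_comp (taylor0 g) (taylor0 g) = taylor0 (fun x => f (f x)))
    by (rewrite <- Hsq; symmetry; apply taylor0_comp; auto).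
  apply (fps_commuting_sqrt_unique _ _ (taylor0 (fun x => f (f x))) (eq_trans (taylor0_0 f) Hf0)
           (eq_trans (taylor0_0 g) Hg0)); rewrite ?taylor0_1; auto using Derive_lt_0_diffeo_minus.
  - apply taylor0_commute_square; auto.
  - rewrite <- Hsq. apply taylor0_commute_square; auto.
  - rewrite <- HAA. exact HX.
Qed.

Lemma taylor0_comp_inverse f g ginv : smooth f -> smooth g -> smooth ginv ->
  f 0 = 0 -> g 0 = 0 -> (forall x, ginv (g x) = x) -> taylor0 f = taylor0 g ->
  taylor0 (fun x => ginv (f x)) = taylor0 (fun x => x).
Proof.
  intros Hf Hg Hginv Hf0 Hg0 Hinv Htay.
  rewrite taylor0_comp, Htay, <- taylor0_comp by auto.
  f_equal. apply functional_extensionality. auto.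
Qed.

Theorem theorem3p2 (f g : R -> R) :
  is_diffeo_minus f -> is_diffeo_minus g ->
  f 0 = 0 -> g 0 = 0 ->
  (forall x, f (f x) = g (g x)) ->
  fps_comp (taylor0 f) (taylor0 f) <> fpsX ->
  taylor0 f = taylor0 g /\
  exists h hinv : R -> R,
    is_diffeo_plus h /\
    (forall x, hinv (h x) = x) /\ (forall x, h (hinv x) = x) /\
    (forall x, f x = hinv (g (h x))).
Proof.
  intros Hfm Hgm Hf0 Hg0 Hfg HX.
  pose proof (taylor0_sqrt_unique f g Hfm Hgm Hf0 Hg0 Hfg HX) as Htay.
  split; [exact Htay|].
  destruct Hfm as [[Hf [finv [Hfinv [Hfinv1 Hfinv2]]]] Hfd].
  destruct Hgm as [[Hg [ginv [Hginv [Hginv1 Hginv2]]]] Hgd].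
  pose proof (decreasing_inverse f finv Hfd Hfinv2) as Hfinvd.
  pose proof (decreasing_inverse g ginv Hgd Hginv2) as Hginvd.
  destruct (glue_id_diffeo_plus (fun x => ginv (f x)) (fun x => finv (g x)))
    as [Hplus [Hinv1 Hinv2]].
  - apply smooth_comp; auto.
  - apply smooth_comp; auto.
  - intros x. rewrite Hginv2. auto.
  - intros x. rewrite Hfinv2. auto.
  - intros x y Hxy. apply Hginvd, Hfd, Hxy.
  - intros x y Hxy. apply Hfinvd, Hgd, Hxy.
  - apply (taylor0_comp_inverse f g); auto.
  - apply (taylor0_comp_inverse g f); auto.
  - exists (glue (fun x => x) (fun x => ginv (f x))), (glue (fun x => x) (fun x => finv (g x))).
    refine (conj Hplus (conj Hinv1 (conj Hinv2 _))). apply glue_conjugation; auto.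
Qed.
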